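(* Let $A$ be a bounded linear operator on a complex Hilbert space $\mathcal H \neq \{0\}$. Then \[ W_0(A)\cap \mathcal C_A = \operatorname{cl} W(A)\cap \mathcal C_A = \sigma(A)\cap \mathcal C_A, \] where $\mathcal C_A=\{z\in\mathbb C : |z|=\|A\|\}$.
   Context: The numerical range of $A$ is $W(A)=\{\langle Ax,x\rangle : x\in\mathcal H,\ \|x\|=1\}$, and $\operatorname{cl}W(A)$ denotes its closure in $\mathbb C$. The maximal numerical range $W_0(A)$ is the set of all $\lambda\in\mathbb C$ for which there exist unit vectors $x_n\in\mathcal H$ with $\|Ax_n\|\to\|A\|$ and $\langle Ax_n,x_n\rangle\to\lambda$. $\sigma(A)$ denotes the spectrum of $A$. *)

From Stdlib Require Import Reals Lra.
Open Scope R_scope.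
Set Implicit Arguments.

Record Cplx : Type := mkC { Re : R ; Im : R }.

Definition C0 : Cplx := mkC 0 0.
Definition C1 : Cplx := mkC 1 0.
Definition Cadd (a b : Cplx) : Cplx := mkC (Re a + Re b) (Im a + Im b).
Definition Copp (a : Cplx) : Cplx := mkC (- Re a) (- Im a).
Definition Csub (a b : Cplx) : Cplx := Cadd a (Copp b).
Definition Cmul (a b : Cplx) : Cplx :=
  mkC (Re a * Re b - Im a * Im b) (Re a * Im b + Im a * Re b).
Definition Cconj (a : Cplx) : Cplx := mkC (Re a) (- Im a).
Definition Cmod (a : Cplx) : R := sqrt (Re a * Re a + Im a * Im a).

Record HilbertSpace : Type := {
  carrier :> Type;
  hzero : carrier;
  hadd : carrier -> carrier -> carrier;
  hopp : carrier -> carrier;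
  hscal : Cplx -> carrier -> carrier;
  hinner : carrier -> carrier -> Cplx;
  hadd_assoc : forall x y z, hadd x (hadd y z) = hadd (hadd x y) z;
  hadd_comm : forall x y, hadd x y = hadd y x;
  hadd_zero : forall x, hadd hzero x = x;
  hadd_opp : forall x, hadd x (hopp x) = hzero;
  hscal_assoc : forall a b x, hscal a (hscal b x) = hscal (Cmul a b) x;
  hscal_one : forall x, hscal C1 x = x;
  hscal_distr_v : forall a x y, hscal a (hadd x y) = hadd (hscal a x) (hscal a y);
  hscal_distr_s : forall a b x, hscal (Cadd a b) x = hadd (hscal a x) (hscal b x);
  hinner_add_l : forall x y z, hinner (hadd x y) z = Cadd (hinner x z) (hinner y z);
  hinner_scal_l : forall a x y, hinner (hscal a x) y = Cmul a (hinner x y);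
  hinner_conj : forall x y, hinner y x = Cconj (hinner x y);
  hinner_pos : forall x, 0 <= Re (hinner x x);
  hinner_def : forall x, hinner x x = C0 -> x = hzero;
  hcomplete : forall u : nat -> carrier,
    (forall eps, eps > 0 -> exists N : nat, forall n m, (n >= N)%nat -> (m >= N)%nat ->
        sqrt (Re (hinner (hadd (u n) (hopp (u m))) (hadd (u n) (hopp (u m))))) < eps) ->
    exists l, forall eps, eps > 0 -> exists N : nat, forall n, (n >= N)%nat ->
        sqrt (Re (hinner (hadd (u n) (hopp l)) (hadd (u n) (hopp l)))) < eps
}.

Section Ops.
Context {H : HilbertSpace}.

Definition hsub (x y : H) : H := hadd H x (hopp H y).
Definition hnorm (x : H) : R := sqrt (Re (hinner H x x)).

Definition is_linear (A : H -> H) : Prop :=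
  (forall x y, A (hadd H x y) = hadd H (A x) (A y)) /\
  (forall a x, A (hscal H a x) = hscal H a (A x)).
Definition is_bounded_op (A : H -> H) : Prop :=
  is_linear A /\ exists M : R, forall x, hnorm (A x) <= M * hnorm x.

(** ||A|| = sup { ||Ax|| : ||x|| = 1 }  (H <> {0}) : [op_norm A r] says r is this sup *)
Definition op_norm (A : H -> H) (r : R) : Prop :=
  is_lub (fun t => exists x : H, hnorm x = 1 /\ t = hnorm (A x)) r.

Definition in_W (A : H -> H) (z : Cplx) : Prop :=
  exists x : H, hnorm x = 1 /\ z = hinner H (A x) x.

Definition in_clW (A : H -> H) (z : Cplx) : Prop :=
  forall eps, eps > 0 -> exists w, in_W A w /\ Cmod (Csub w z) < eps.

Definition in_W0 (A : H -> H) (nA : R) (z : Cplx) : Prop :=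
  exists x : nat -> H,
    (forall n, hnorm (x n) = 1) /\
    Un_cv (fun n => hnorm (A (x n))) nA /\
    Un_cv (fun n => Cmod (Csub (hinner H (A (x n)) (x n)) z)) 0.

Definition in_spectrum (A : H -> H) (z : Cplx) : Prop :=
  ~ exists B : H -> H, is_bounded_op B /\
      (forall x, B (hsub (A x) (hscal H z x)) = x) /\
      (forall x, hsub (A (B x)) (hscal H z (B x)) = x).

End Ops.

From Pilot Require Import Defs.
From Stdlib Require Import Reals Lra Psatz ClassicalEpsilon Classical.
Open Scope R_scope.

(* Let x be a unit vector and w = <Ax, x>, so |w| <= ||A|| = |z|.  Expanding squares gives
     ||Ax - zx||^2 <= 2 Re (conj z (z - w)) <= 2 ||A|| |z - w|,
     |z - w|^2 <= 2 Re (conj z (z - w)).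
   By the first inequality, a point of cl W(A) on the circle is an approximate eigenvalue, hence in
   the spectrum; and |<Ax_n, x_n>| -> |z| = ||A|| already forces ||Ax_n|| -> ||A||, so cl W(A) and
   W_0(A) agree there.  By the second, if z is at distance eps > 0 from W(A) then -conj z (A - z)
   is coercive with constant eps^2/2, and a bounded coercive operator is invertible by Banach's
   fixed-point theorem, so z is not in the spectrum. *)

Lemma le_of_sq_le (a b : R) : 0 <= b -> a ^ 2 <= b ^ 2 -> a <= b.
Proof. intros; nra. Qed.

Lemma eq_of_sq_eq (a b : R) : 0 <= a -> 0 <= b -> a ^ 2 = b ^ 2 -> a = b.
Proof. intros; apply Rle_antisym; apply le_of_sq_le; lra. Qed.

Lemma Cplx_eq (a b : Cplx) : Re a = Re b -> Im a = Im b -> a = b.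
Proof. destruct a, b; simpl; intros; subst; reflexivity. Qed.

Lemma Cmod_ge0 (a : Cplx) : 0 <= Cmod a.
Proof. apply sqrt_pos. Qed.

Lemma Cmod_sq (a : Cplx) : Cmod a ^ 2 = Re a ^ 2 + Im a ^ 2.
Proof. unfold Cmod. rewrite pow2_sqrt by nra. ring. Qed.

Lemma Cmod_real (t : R) : Cmod (mkC t 0) = Rabs t.
Proof. unfold Cmod; simpl. rewrite Rmult_0_l, Rplus_0_r. apply sqrt_Rsqr_abs. Qed.

Lemma Re_le_Cmod (a : Cplx) : Re a <= Cmod a.
Proof. apply le_of_sq_le; [apply Cmod_ge0 |]. rewrite Cmod_sq. nra. Qed.

Lemma Cmod_mul (a b : Cplx) : Cmod (Cmul a b) = Cmod a * Cmod b.
Proof.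
  apply eq_of_sq_eq; [apply Cmod_ge0 | apply Rmult_le_pos; apply Cmod_ge0 |].
  rewrite Rpow_mult_distr, !Cmod_sq. simpl. ring.
Qed.

Lemma Re_mul_le (a b : Cplx) : Re (Cmul a b) <= Cmod a * Cmod b.
Proof. rewrite <- Cmod_mul. apply Re_le_Cmod. Qed.

Lemma Cmod_conj (a : Cplx) : Cmod (Cconj a) = Cmod a.
Proof. unfold Cmod; simpl. f_equal. ring. Qed.

Lemma Cmod_opp (a : Cplx) : Cmod (Copp a) = Cmod a.
Proof. unfold Cmod; simpl. f_equal. ring. Qed.

Lemma Cmod_sub_sym (a b : Cplx) : Cmod (Csub a b) = Cmod (Csub b a).
Proof. unfold Cmod; simpl. f_equal. ring. Qed.

Lemma Cmod_triangle (a b : Cplx) : Cmod (Cadd a b) <= Cmod a + Cmod b.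
Proof.
  pose proof (Cmod_ge0 a); pose proof (Cmod_ge0 b).
  pose proof (Re_le_Cmod (Cmul (Cconj a) b)) as D.
  rewrite Cmod_mul, Cmod_conj in D.
  apply le_of_sq_le; [lra |].
  pose proof (Cmod_sq a); pose proof (Cmod_sq b); rewrite Cmod_sq. simpl in *. nra.
Qed.

Lemma Cmod_sub_le (a b : Cplx) : Cmod (Csub a b) <= Cmod a + Cmod b.
Proof.
  rewrite <- (Cmod_opp b). apply Cmod_triangle.
Qed.

Lemma Cmod_sub_ge (a b : Cplx) : Cmod a - Cmod b <= Cmod (Csub a b).
Proof.
  pose proof (Cmod_triangle (Csub a b) b) as T.
  replace (Cadd (Csub a b) b) with a in T by (apply Cplx_eq; simpl; ring). lra.
Qed.

Lemma Cmod_sub_sq_le (z w : Cplx) :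
  Cmod w <= Cmod z -> Cmod (Csub z w) ^ 2 <= 2 * Re (Cmul (Cconj z) (Csub z w)).
Proof.
  intro Hwz. pose proof (Cmod_ge0 w).
  assert (Cmod w ^ 2 <= Cmod z ^ 2) by nra.
  rewrite !Cmod_sq in *. simpl in *. nra.
Qed.

Section Hilbert.
Variable H : HilbertSpace.
Local Notation add := (hadd H).
Local Notation opp := (hopp H).
Local Notation zero := (hzero H).
Local Notation scal := (hscal H).
Local Notation inner := (hinner H).

Lemma add_cancel_l (a b c : H) : add a b = add a c -> b = c.
Proof.
  intro E.
  rewrite <- (hadd_zero H b), <- (hadd_zero H c), <- (hadd_opp H a),
    (hadd_comm H a), <- !hadd_assoc, E.
  reflexivity.
Qed.

Lemma scal0 (x : H) : scal Defs.C0 x = zero.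
Proof.
  apply (add_cancel_l (scal Defs.C0 x)).
  rewrite <- hscal_distr_s, (hadd_comm H _ zero), hadd_zero.
  f_equal. apply Cplx_eq; simpl; ring.
Qed.

Lemma opp_scal (x : H) : opp x = scal (mkC (-1) 0) x.
Proof.
  apply (add_cancel_l x). rewrite hadd_opp.
  rewrite <- (hscal_one H x) at 1. rewrite <- hscal_distr_s, <- (scal0 x).
  symmetry. f_equal. apply Cplx_eq; simpl; ring.
Qed.

Lemma scal_comm (a b : Cplx) (x : H) : scal a (scal b x) = scal b (scal a x).
Proof. rewrite !hscal_assoc. f_equal. apply Cplx_eq; simpl; ring. Qed.

Lemma scal_opp (a : Cplx) (x : H) : scal a (opp x) = opp (scal a x).
Proof. rewrite !opp_scal. apply scal_comm. Qed.

Lemma opp_add (x y : H) : opp (add x y) = add (opp x) (opp y).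
Proof. rewrite !opp_scal. apply hscal_distr_v. Qed.

Lemma opp_opp (x : H) : opp (opp x) = x.
Proof.
  rewrite !opp_scal, hscal_assoc.
  replace (Cmul _ _) with Defs.C1 by (apply Cplx_eq; simpl; ring). apply hscal_one.
Qed.

Lemma scal_sub (a : Cplx) (x y : H) : scal a (hsub x y) = hsub (scal a x) (scal a y).
Proof. unfold hsub. rewrite hscal_distr_v, scal_opp. reflexivity. Qed.

Lemma add_add_comm (a b c d : H) : add (add a b) (add c d) = add (add a c) (add b d).
Proof.
  rewrite <- !hadd_assoc. f_equal. rewrite !hadd_assoc. f_equal. apply hadd_comm.
Qed.

Lemma sub_add_add (a b c d : H) : hsub (add a b) (add c d) = add (hsub a c) (hsub b d).
Proof. unfold hsub. rewrite opp_add. apply add_add_comm. Qed.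

Lemma sub_sub_sub (a b c d : H) : hsub (hsub a b) (hsub c d) = hsub (hsub a c) (hsub b d).
Proof. unfold hsub. rewrite !opp_add. apply add_add_comm. Qed.

Lemma sub_self (x : H) : hsub x x = zero.
Proof. apply hadd_opp. Qed.

Lemma sub_sub_self (x y : H) : hsub x (hsub x y) = y.
Proof.
  unfold hsub. rewrite opp_add, opp_opp, hadd_assoc, hadd_opp, hadd_zero. reflexivity.
Qed.

Lemma sub_eq_self (x y : H) : hsub x y = x -> y = zero.
Proof. intro E. rewrite <- (sub_sub_self x y), E. apply sub_self. Qed.

Lemma add_sub_sub (x y z : H) : add (hsub x y) (hsub y z) = hsub x z.
Proof.
  unfold hsub. rewrite <- !hadd_assoc. f_equal.
  rewrite hadd_assoc, (hadd_comm H (opp y)), hadd_opp, hadd_zero. reflexivity.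
Qed.

Lemma opp_zero : opp zero = zero.
Proof. rewrite <- (hadd_zero H (opp zero)). apply hadd_opp. Qed.

Lemma sub_zero_r (x : H) : hsub x zero = x.
Proof. unfold hsub. rewrite opp_zero, hadd_comm. apply hadd_zero. Qed.

Lemma sub_eq0 (x y : H) : hsub x y = zero -> x = y.
Proof. intro E. rewrite <- (sub_sub_self x y), E. symmetry. apply sub_zero_r. Qed.

Lemma linear_zero (f : H -> H) : is_linear f -> f zero = zero.
Proof. intros [_ Hs]. rewrite <- (scal0 zero) at 1. rewrite Hs. apply scal0. Qed.

Lemma linear_sub (f : H -> H) (x y : H) : is_linear f -> f (hsub x y) = hsub (f x) (f y).
Proof. intros [Ha Hs]. unfold hsub. rewrite Ha, !opp_scal, Hs. reflexivity. Qed.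

Lemma linear_sub_scal (f : H -> H) (z : Cplx) :
  is_linear f -> is_linear (fun x => hsub (f x) (scal z x)).
Proof.
  intros [f_add f_scal]. split.
  - intros x y. rewrite f_add, hscal_distr_v. apply sub_add_add.
  - intros b x. rewrite f_scal, scal_sub, scal_comm. reflexivity.
Qed.

Lemma inner_add_r (x y z : H) : inner x (add y z) = Cadd (inner x y) (inner x z).
Proof.
  rewrite (hinner_conj H _ x), hinner_add_l, (hinner_conj H y x), (hinner_conj H z x).
  apply Cplx_eq; simpl; ring.
Qed.

Lemma inner_scal_r (a : Cplx) (x y : H) : inner x (scal a y) = Cmul (Cconj a) (inner x y).
Proof.
  rewrite (hinner_conj H _ x), hinner_scal_l, (hinner_conj H y x).
  apply Cplx_eq; simpl; ring.
Qed.

Lemma Im_inner_self (x : H) : Im (inner x x) = 0.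
Proof. pose proof (f_equal Im (hinner_conj H x x)) as E. simpl in E. lra. Qed.

Lemma hnorm_ge0 (x : H) : 0 <= hnorm x.
Proof. apply sqrt_pos. Qed.

Lemma hnorm_sq (x : H) : hnorm x ^ 2 = Re (inner x x).
Proof. apply pow2_sqrt, hinner_pos. Qed.

Lemma hnorm_eq0 (x : H) : hnorm x = 0 -> x = zero.
Proof.
  intro E. apply hinner_def, Cplx_eq; [| apply Im_inner_self].
  rewrite <- hnorm_sq, E. simpl. ring.
Qed.

Lemma hnorm_zero : hnorm zero = 0.
Proof.
  unfold hnorm. rewrite <- (scal0 zero), hinner_scal_l. simpl.
  replace (0 * _ - 0 * _) with 0 by ring. apply sqrt_0.
Qed.

Lemma hnorm_scal (a : Cplx) (x : H) : hnorm (scal a x) = Cmod a * hnorm x.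
Proof.
  apply eq_of_sq_eq; [apply hnorm_ge0 | apply Rmult_le_pos; [apply Cmod_ge0 | apply hnorm_ge0] |].
  rewrite Rpow_mult_distr, Cmod_sq, !hnorm_sq, hinner_scal_l, inner_scal_r.
  simpl. rewrite Im_inner_self. ring.
Qed.

Lemma unit_decomposition (x : H) : x <> zero ->
  exists u, hnorm u = 1 /\ 0 < hnorm x /\ x = scal (mkC (hnorm x) 0) u.
Proof.
  intro Hx. set (t := hnorm x).
  assert (Ht : 0 < t).
  { pose proof (hnorm_ge0 x). destruct (Req_dec t 0) as [E | E]; [| unfold t in *; lra].
    exfalso. exact (Hx (hnorm_eq0 x E)). }
  exists (scal (mkC (/ t) 0) x). repeat split; [| exact Ht |].
  - rewrite hnorm_scal, Cmod_real, Rabs_right by (apply Rle_ge, Rlt_le, Rinv_0_lt_compat; lra).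
    fold t. field. lra.
  - rewrite hscal_assoc. replace (Cmul _ _) with Defs.C1 by (apply Cplx_eq; simpl; field; lra).
    symmetry. apply hscal_one.
Qed.

Lemma unit_inner (x : H) : hnorm x = 1 -> inner x x = Defs.C1.
Proof.
  intro Hx. apply Cplx_eq; [| apply Im_inner_self]. rewrite <- hnorm_sq, Hx. simpl. ring.
Qed.

Lemma bound_of_unit_bound (f : H -> H) (m : R) : is_linear f ->
  (forall u, hnorm u = 1 -> hnorm (f u) <= m) -> forall x, hnorm (f x) <= m * hnorm x.
Proof.
  intros f_lin Unit x. destruct (classic (x = zero)) as [-> | Hx].
  - rewrite linear_zero, hnorm_zero by exact f_lin. lra.
  - destruct (unit_decomposition x Hx) as [u [Hu [Hpos Ex]]].
    rewrite Ex at 1. destruct f_lin as [_ f_scal].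
    rewrite f_scal, hnorm_scal, Cmod_real, Rabs_right by lra.
    pose proof (Unit u Hu). nra.
Qed.

Lemma coercive_of_unit_coercive (f : H -> H) (a : Cplx) (c : R) : is_linear f ->
  (forall u, hnorm u = 1 -> c <= Re (Cmul a (inner (f u) u))) ->
  forall x, c * hnorm x ^ 2 <= Re (Cmul a (inner (f x) x)).
Proof.
  intros f_lin Unit x. destruct (classic (x = zero)) as [-> | Hx].
  - rewrite linear_zero, hnorm_zero by exact f_lin.
    rewrite <- (scal0 zero) at 1. rewrite hinner_scal_l. simpl. lra.
  - destruct (unit_decomposition x Hx) as [u [Hu [Hpos Ex]]].
    rewrite Ex. destruct f_lin as [_ f_scal].
    rewrite f_scal, hinner_scal_l, inner_scal_r, hnorm_scal, Cmod_real, Rabs_right by lra.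
    pose proof (Unit u Hu) as C. simpl in *. rewrite Hu. nra.
Qed.

Lemma hnorm_add_sq (x y : H) :
  hnorm (add x y) ^ 2 = hnorm x ^ 2 + 2 * Re (inner x y) + hnorm y ^ 2.
Proof.
  rewrite !hnorm_sq, hinner_add_l, !inner_add_r, (hinner_conj H x y). simpl. ring.
Qed.

Lemma hnorm_sub_scal_sq (u x : H) (a : Cplx) :
  hnorm (hsub u (scal a x)) ^ 2
  = hnorm u ^ 2 - 2 * Re (Cmul (Cconj a) (inner u x)) + Cmod a ^ 2 * hnorm x ^ 2.
Proof.
  unfold hsub. rewrite opp_scal, hscal_assoc, hnorm_add_sq, hnorm_scal, inner_scal_r.
  rewrite Rpow_mult_distr, !Cmod_sq. simpl. ring.
Qed.

Lemma Cauchy_Schwarz (x y : H) : Cmod (inner x y) <= hnorm x * hnorm y.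
Proof.
  destruct (Req_dec (hnorm y) 0) as [Y0 | Y0].
  - rewrite (hnorm_eq0 y Y0), hnorm_zero, <- (scal0 zero), inner_scal_r.
    replace (Cmul _ _) with (mkC 0 0) by (apply Cplx_eq; simpl; ring).
    rewrite Cmod_real, Rabs_R0. lra.
  - set (p := inner x y). set (Y := hnorm y ^ 2).
    assert (HY : 0 < Y) by (pose proof (hnorm_ge0 y); unfold Y; nra).
    pose proof (pow2_ge_0 (hnorm (hsub x (scal (mkC (Re p / Y) (Im p / Y)) y)))) as P.
    rewrite hnorm_sub_scal_sq, Cmod_sq in P. fold p Y in P. simpl in P.
    apply le_of_sq_le; [apply Rmult_le_pos; apply hnorm_ge0 |].
    rewrite Cmod_sq, Rpow_mult_distr. fold Y.
    apply (Rmult_le_compat_r Y) in P; [| lra].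
    replace ((_ - _ + _) * Y) with (hnorm x ^ 2 * Y - (Re p ^ 2 + Im p ^ 2)) in P
      by (field; lra).
    lra.
Qed.

Lemma hnorm_triangle (x y : H) : hnorm (add x y) <= hnorm x + hnorm y.
Proof.
  pose proof (hnorm_ge0 x); pose proof (hnorm_ge0 y).
  pose proof (Re_le_Cmod (inner x y)); pose proof (Cauchy_Schwarz x y).
  apply le_of_sq_le; [lra |]. rewrite hnorm_add_sq. nra.
Qed.

Lemma hnorm_sub_triangle (x y z : H) : hnorm (hsub x z) <= hnorm (hsub x y) + hnorm (hsub y z).
Proof. rewrite <- (add_sub_sub x y z). apply hnorm_triangle. Qed.

Lemma hnorm_opp (x : H) : hnorm (opp x) = hnorm x.
Proof.
  rewrite opp_scal, hnorm_scal, Cmod_real, Rabs_left by lra. ring.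
Qed.

Lemma hnorm_sub_le (x y : H) : hnorm (hsub x y) <= hnorm x + hnorm y.
Proof. rewrite <- (hnorm_opp y). apply hnorm_triangle. Qed.

Lemma hnorm_sub_sym (x y : H) : hnorm (hsub x y) = hnorm (hsub y x).
Proof.
  rewrite <- hnorm_opp. unfold hsub. rewrite opp_add, opp_opp, hadd_comm. reflexivity.
Qed.

Lemma eq_of_hnorm_sub_small (x y : H) : (forall e, e > 0 -> hnorm (hsub x y) < e) -> x = y.
Proof.
  intro Small. pose proof (hnorm_ge0 (hsub x y)).
  assert (E : hnorm (hsub x y) = 0).
  { destruct (Req_dec (hnorm (hsub x y)) 0) as [E | E]; [exact E |].
    specialize (Small (hnorm (hsub x y))). lra. }
  apply hnorm_eq0, sub_eq0 in E. exact E.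
Qed.

Section Geometric.
Variables (u : nat -> H) (d q : R).
Hypothesis d_ge0 : 0 <= d.
Hypothesis q_range : 0 <= q < 1.
Hypothesis u_step : forall k, hnorm (hsub (u (S k)) (u k)) <= d * q ^ k.

Lemma geometric_tail (m p : nat) : hnorm (hsub (u (m + p)) (u m)) <= d * q ^ m / (1 - q).
Proof.
  assert (Tail : hnorm (hsub (u (m + p)) (u m)) <= d * q ^ m * (1 - q ^ p) / (1 - q)).
  { induction p as [| p IH].
    - rewrite Nat.add_0_r, sub_self, hnorm_zero. simpl.
      replace (_ * (1 - 1) / _) with 0 by (field; lra). lra.
    - eapply Rle_trans; [apply (hnorm_sub_triangle _ (u (m + p)%nat)) |].
      rewrite Nat.add_succ_r. pose proof (u_step (m + p)) as Step. rewrite pow_add in Step.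
      replace (d * q ^ m * (1 - q ^ S p) / (1 - q))
        with (d * (q ^ m * q ^ p) + d * q ^ m * (1 - q ^ p) / (1 - q)) by (simpl; field; lra).
      lra. }
  eapply Rle_trans; [exact Tail |].
  apply Rmult_le_compat_r; [apply Rlt_le, Rinv_0_lt_compat; lra |].
  pose proof (pow_le q p (proj1 q_range)); pose proof (pow_le q m (proj1 q_range)).
  assert (0 <= d * q ^ m) by (apply Rmult_le_pos; lra). nra.
Qed.

Lemma geometric_cauchy (e : R) : e > 0 ->
  exists N : nat, forall n m, (n >= N)%nat -> (m >= N)%nat -> hnorm (hsub (u n) (u m)) < e.
Proof.
  intro He.
  destruct (pow_lt_1_zero q ltac:(rewrite Rabs_right; lra) (e * (1 - q) / (d + 1)))
    as [N HN]; [apply Rdiv_lt_0_compat; nra |].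
  assert (Near : forall a b, (b >= N)%nat -> (a >= b)%nat -> hnorm (hsub (u a) (u b)) < e).
  { intros a b Hb Hab. replace a with (b + (a - b))%nat by lia.
    eapply Rle_lt_trans; [apply geometric_tail |].
    specialize (HN b Hb). rewrite Rabs_right in HN by (apply Rle_ge, pow_le; lra).
    pose proof (pow_le q b (proj1 q_range)).
    apply (Rmult_lt_reg_r (1 - q)); [lra |].
    replace (d * q ^ b / (1 - q) * (1 - q)) with (d * q ^ b) by (field; lra).
    apply (Rmult_lt_compat_r (d + 1)) in HN; [| lra].
    replace (e * (1 - q) / (d + 1) * (d + 1)) with (e * (1 - q)) in HN by (field; lra).
    nra. }
  exists N. intros n m Hn Hm. destruct (Nat.le_ge_cases n m).
  - rewrite hnorm_sub_sym. apply Near; lia.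
  - apply Near; lia.
Qed.

End Geometric.

Theorem banach_fixed_point (F : H -> H) (q : R) : 0 <= q < 1 ->
  (forall x y, hnorm (hsub (F x) (F y)) <= q * hnorm (hsub x y)) -> exists x, F x = x.
Proof.
  intros Hq Contr.
  set (u := fun k => Nat.iter k F zero).
  set (d := hnorm (hsub (u 1%nat) (u 0%nat))).
  assert (Step : forall k, hnorm (hsub (u (S k)) (u k)) <= d * q ^ k).
  { induction k as [| k IH]; [rewrite pow_O, Rmult_1_r; apply Rle_refl |].
    eapply Rle_trans; [apply (Contr (u (S k)) (u k)) |]. rewrite <- tech_pow_Rmult.
    pose proof (hnorm_ge0 (hsub (u (S k)) (u k))). nra. }
  destruct (hcomplete H u (geometric_cauchy u d q (hnorm_ge0 _) Hq Step)) as [l Hl].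
  exists l. apply eq_of_hnorm_sub_small. intros e He.
  destruct (Hl (e / 2) ltac:(lra)) as [N HN].
  pose proof (HN N (le_n _)) as HuN. pose proof (HN (S N) (le_S _ _ (le_n _))) as HuSN.
  change (sqrt _) with (hnorm (hsub (u N) l)) in HuN.
  change (sqrt _) with (hnorm (hsub (F (u N)) l)) in HuSN.
  pose proof (Contr l (u N)). rewrite (hnorm_sub_sym l (u N)) in *.
  pose proof (hnorm_sub_triangle (F l) (F (u N)) l). nra.
Qed.
End Hilbert.

(** * Bounded coercive operators are invertible *)

Section Coercive.
Variables (H : HilbertSpace) (T : H -> H) (M c : R) (a : Cplx).
Hypothesis T_lin : is_linear T.
Hypothesis T_bounded : forall x, hnorm (T x) <= M * hnorm x.
Hypothesis c_pos : 0 < c.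
Hypothesis a_nz : 0 < Cmod a.
Hypothesis T_coercive : forall x, c * hnorm x ^ 2 <= Re (Cmul a (hinner H (T x) x)).

Lemma coercive_lower (x : H) : c * hnorm x <= Cmod a * hnorm (T x).
Proof.
  pose proof (hnorm_ge0 _ x) as Hx. pose proof (hnorm_ge0 _ (T x)).
  pose proof (T_coercive x) as Co.
  pose proof (Re_mul_le a (hinner H (T x) x)). pose proof (Cauchy_Schwarz _ (T x) x).
  destruct (Req_dec (hnorm x) 0) as [E | E]; [rewrite E; nra |].
  apply (Rmult_le_reg_r (hnorm x)); nra.
Qed.

Lemma coercive_injective (x y : H) : T x = T y -> x = y.
Proof.
  intro E. apply sub_eq0, hnorm_eq0.
  pose proof (coercive_lower (hsub x y)) as L.
  rewrite linear_sub, E, sub_self, hnorm_zero in L by exact T_lin.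
  pose proof (hnorm_ge0 _ (hsub x y)). nra.
Qed.

(* [x |-> x - t a (T x - y)] is a contraction for small [t > 0];
   its fixed points solve [T x = y]. *)
Lemma coercive_surjective (y : H) : exists x, T x = y.
Proof.
  set (K := Cmod a ^ 2 * M ^ 2).
  assert (HK : 0 <= K) by (unfold K; nra).
  set (t := c / (K + c ^ 2 + 1)).
  assert (Ht : 0 < t) by (apply Rdiv_lt_0_compat; nra).
  assert (Htd : t * (K + c ^ 2 + 1) = c) by (unfold t; field; nra).
  assert (HtK : t * K <= c) by nra.
  assert (Htc : t * c < 1) by nra.
  set (s := Cmul (mkC t 0) a).
  set (F := fun x => hsub x (hscal H s (hsub (T x) y))).
  destruct (banach_fixed_point H F (sqrt (1 - t * c))) as [x Fx].
  - split; [apply sqrt_pos |]. rewrite <- sqrt_1 at 2. apply sqrt_lt_1_alt. split; nra.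
  - intros u v. unfold F.
    rewrite sub_sub_sub, <- scal_sub, sub_sub_sub, sub_self, sub_zero_r, <- linear_sub
      by exact T_lin.
    set (d := hsub u v).
    apply le_of_sq_le; [apply Rmult_le_pos; [apply sqrt_pos | apply hnorm_ge0] |].
    rewrite Rpow_mult_distr, pow2_sqrt by nra.
    rewrite hnorm_sub_scal_sq, (hinner_conj H (T d) d).
    replace (Re (Cmul (Cconj s) (Cconj (hinner H (T d) d))))
      with (t * Re (Cmul a (hinner H (T d) d))) by (unfold s; simpl; ring).
    unfold s. rewrite Cmod_mul, Cmod_real, Rabs_right by lra.
    pose proof (T_coercive d) as Co. pose proof (T_bounded d).
    pose proof (hnorm_ge0 _ d). pose proof (hnorm_ge0 _ (T d)).
    assert (hnorm (T d) ^ 2 <= M ^ 2 * hnorm d ^ 2) by nra.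
    assert (t ^ 2 * Cmod a ^ 2 * hnorm (T d) ^ 2 <= t * c * hnorm d ^ 2).
    { apply Rle_trans with (t * (t * K) * hnorm d ^ 2).
      { replace (t * (t * K) * hnorm d ^ 2) with (t ^ 2 * Cmod a ^ 2 * (M ^ 2 * hnorm d ^ 2))
          by (unfold K; ring).
        apply Rmult_le_compat_l; [nra | assumption]. }
      apply Rmult_le_compat_r; [nra |]. apply Rmult_le_compat_l; lra. }
    nra.
  - exists x. apply sub_eq0, hnorm_eq0.
    apply sub_eq_self in Fx. apply (f_equal hnorm) in Fx.
    unfold s in Fx. rewrite hnorm_scal, hnorm_zero, Cmod_mul, Cmod_real, Rabs_right in Fx by lra.
    apply Rmult_integral in Fx as [Fx | Fx]; [nra | exact Fx].
Qed.

Theorem coercive_invertible : exists B : H -> H,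
  is_bounded_op B /\ (forall x, B (T x) = x) /\ (forall y, T (B y) = y).
Proof.
  set (B := fun y => proj1_sig (constructive_indefinite_description _ (coercive_surjective y))).
  assert (TB : forall y, T (B y) = y)
    by (intro y; exact (proj2_sig (constructive_indefinite_description _ (coercive_surjective y)))).
  exists B. split; [split; [split |] | split].
  - intros x y. apply coercive_injective. destruct T_lin as [Tadd _].
    rewrite Tadd, !TB. reflexivity.
  - intros b x. apply coercive_injective. destruct T_lin as [_ Tscal].
    rewrite Tscal, !TB. reflexivity.
  - exists (Cmod a / c). intro y. pose proof (coercive_lower (B y)) as L. rewrite TB in L.
    apply (Rmult_le_reg_l c); [exact c_pos |]. unfold Rdiv.
    replace (c * (Cmod a * / c * hnorm y)) with (Cmod a * hnorm y) by (field; lra). exact L.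
  - intro x. apply coercive_injective. apply TB.
  - exact TB.
Qed.
End Coercive.

(** * The circle of radius the norm *)

Lemma Un_cv_of_dist_le (u : nat -> R) (l : R) :
  (forall k, Rdist (u k) l <= / INR (S k)) -> Un_cv u l.
Proof.
  intros Hu e He. destruct (archimed_cor1 e He) as [N [HN N0]].
  exists N. intros k Hk. eapply Rle_lt_trans; [apply Hu |]. eapply Rle_lt_trans; [| exact HN].
  apply Rinv_le_contravar; [apply lt_0_INR; lia | apply le_INR; lia].
Qed.

Lemma W0_clW (H : HilbertSpace) (A : H -> H) (nA : R) (z : Cplx) :
  in_W0 A nA z -> in_clW A z.
Proof.
  intros [x [Hx [_ Hw]]] e He. destruct (Hw e He) as [N HN].
  exists (hinner H (A (x N)) (x N)). split; [exists (x N); auto |].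
  specialize (HN N (le_n _)). unfold Rdist in HN. rewrite Rminus_0_r in HN.
  eapply Rle_lt_trans; [apply Rle_abs | exact HN].
Qed.

Section CircleOfRadiusNorm.
Variables (H : HilbertSpace) (A : H -> H) (nA : R) (z : Cplx).
Hypothesis A_lin : is_linear A.
Hypothesis A_le : forall x, hnorm (A x) <= nA * hnorm x.
Hypothesis z_norm : Cmod z = nA.

Lemma Cmod_inner_unit_le (x : H) : hnorm x = 1 -> Cmod (hinner H (A x) x) <= nA.
Proof.
  intro Hx. pose proof (Cauchy_Schwarz H (A x) x) as CS. pose proof (A_le x).
  rewrite Hx in *. lra.
Qed.

Lemma approx_eigenvector (x : H) : hnorm x = 1 ->
  hnorm (hsub (A x) (hscal H z x)) ^ 2 <= 2 * nA * Cmod (Csub z (hinner H (A x) x)).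
Proof.
  intro Hx. set (w := hinner H (A x) x).
  rewrite hnorm_sub_scal_sq, Hx. fold w.
  pose proof (A_le x) as HA. rewrite Hx in HA. pose proof (hnorm_ge0 _ (A x)).
  pose proof (Re_mul_le (Cconj z) (Csub z w)) as Re_le. rewrite Cmod_conj, z_norm in Re_le.
  assert (E : Re (Cmul (Cconj z) (Csub z w)) = Cmod z ^ 2 - Re (Cmul (Cconj z) w))
    by (rewrite Cmod_sq; simpl; ring).
  rewrite z_norm in E. nra.
Qed.

Lemma clW_W0 : in_clW A z -> in_W0 A nA z.
Proof.
  intro Hcl.
  assert (Ex : forall k : nat, exists x : H,
             hnorm x = 1 /\ Cmod (Csub (hinner H (A x) x) z) < / INR (S k)).
  { intro k. destruct (Hcl (/ INR (S k))) as [w [[x [Hx ->]] Hw]];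
      [apply Rlt_gt, Rinv_0_lt_compat, lt_0_INR; lia |].
    exists x. auto. }
  set (x := fun k => proj1_sig (constructive_indefinite_description _ (Ex k))).
  assert (Hx : forall k, hnorm (x k) = 1 /\
                 Cmod (Csub (hinner H (A (x k)) (x k)) z) < / INR (S k))
    by (intro k; exact (proj2_sig (constructive_indefinite_description _ (Ex k)))).
  exists x. repeat split; [intro k; apply Hx | |]; apply Un_cv_of_dist_le; intro k;
    destruct (Hx k) as [Hu Hw]; unfold Rdist.
  - pose proof (Cauchy_Schwarz H (A (x k)) (x k)) as CS. pose proof (A_le (x k)).
    pose proof (Cmod_sub_ge z (hinner H (A (x k)) (x k))).
    rewrite Cmod_sub_sym in Hw. rewrite Hu in *. rewrite Rabs_left1; lra.
  - rewrite Rminus_0_r, Rabs_right by (apply Rle_ge, Cmod_ge0). lra.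
Qed.

Lemma clW_spectrum : in_clW A z -> in_spectrum A z.
Proof.
  intros Hcl [B [[_ [M HM]] [BT _]]].
  assert (nA0 : 0 <= nA) by (rewrite <- z_norm; apply Cmod_ge0).
  (* [d] is small enough that [1 <= ||x|| = ||B (Ax - zx)||] fails for the unit vector [x]. *)
  set (d := / (2 * nA * (M ^ 2 + 1) + 1)).
  assert (Hd : d * (2 * nA * (M ^ 2 + 1) + 1) = 1) by (unfold d; field; nra).
  assert (d0 : 0 < d) by (unfold d; apply Rinv_0_lt_compat; nra).
  destruct (Hcl d d0) as [w [[x [Hx ->]] Hw]].
  pose proof (approx_eigenvector x Hx) as Ev. rewrite Cmod_sub_sym in Ev.
  pose proof (HM (hsub (A x) (hscal H z x))) as HB. rewrite BT, Hx in HB.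
  pose proof (hnorm_ge0 _ (hsub (A x) (hscal H z x))).
  assert (1 <= M ^ 2 * hnorm (hsub (A x) (hscal H z x)) ^ 2) by nra.
  assert (M ^ 2 * (2 * nA * Cmod (Csub (hinner H (A x) x) z)) <= (M ^ 2 + 1) * (2 * nA * d)).
  { pose proof (Cmod_ge0 (Csub (hinner H (A x) x) z)). apply Rmult_le_compat; nra. }
  nra.
Qed.

Lemma coercive_of_far (eps : R) : 0 < eps ->
  (forall x : H, hnorm x = 1 -> eps <= Cmod (Csub (hinner H (A x) x) z)) ->
  forall x, eps ^ 2 / 2 * hnorm x ^ 2
            <= Re (Cmul (Copp (Cconj z)) (hinner H (hsub (A x) (hscal H z x)) x)).
Proof.
  intros eps_pos Far. apply coercive_of_unit_coercive; [apply linear_sub_scal, A_lin |].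
  intros x Hx. set (w := hinner H (A x) x).
  assert (E : Cmul (Copp (Cconj z)) (hinner H (hsub (A x) (hscal H z x)) x)
              = Cmul (Cconj z) (Csub z w)).
  { unfold hsub. rewrite hinner_add_l, opp_scal, !hinner_scal_l, unit_inner by exact Hx.
    fold w. apply Cplx_eq; simpl; ring. }
  rewrite E.
  pose proof (Cmod_sub_sq_le z w) as Chord. rewrite z_norm in Chord.
  specialize (Chord (Cmod_inner_unit_le x Hx)).
  pose proof (Far x Hx) as F. fold w in F. rewrite Cmod_sub_sym in F.
  nra.
Qed.

Lemma spectrum_clW (hH : exists x : H, x <> hzero H) : in_spectrum A z -> in_clW A z.
Proof.
  intro Hs. apply NNPP. intro Hcl.
  destruct (not_all_ex_not _ _ Hcl) as [eps Heps].
  apply imply_to_and in Heps. destruct Heps as [eps_pos Hfar].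
  assert (Far : forall x : H, hnorm x = 1 -> eps <= Cmod (Csub (hinner H (A x) x) z)).
  { intros x Hx. apply Rnot_lt_le. intro Lt. apply Hfar.
    exists (hinner H (A x) x). split; [exists x; auto | exact Lt]. }
  assert (nA_pos : 0 < nA).
  { destruct hH as [x0 Hx0]. destruct (unit_decomposition H x0 Hx0) as [u [Hu _]].
    pose proof (Far u Hu) as F. pose proof (Cmod_inner_unit_le u Hu).
    pose proof (Cmod_sub_le (hinner H (A u) u) z). lra. }
  apply Hs, (coercive_invertible H (fun x => hsub (A x) (hscal H z x))
                                  (2 * nA) (eps ^ 2 / 2) (Copp (Cconj z))).
  - apply linear_sub_scal, A_lin.
  - intro x. eapply Rle_trans; [apply hnorm_sub_le |].
    rewrite hnorm_scal, z_norm. pose proof (A_le x). lra.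
  - nra.
  - rewrite Cmod_opp, Cmod_conj. lra.
  - apply coercive_of_far; assumption.
Qed.

End CircleOfRadiusNorm.

Theorem lemma1 (H : HilbertSpace) (A : H -> H) (nA : R)
  (hH : exists x : H, x <> hzero H)
  (hA : is_bounded_op A)
  (hnA : op_norm A nA) :
  forall z : Cplx, Cmod z = nA ->
    (in_W0 A nA z <-> in_clW A z) /\ (in_clW A z <-> in_spectrum A z).
Proof.
  destruct hA as [A_lin _].
  assert (A_le : forall x, hnorm (A x) <= nA * hnorm x).
  { apply bound_of_unit_bound; [exact A_lin |].
    intros u Hu. apply (proj1 hnA). exists u. auto. }
  intros z z_norm. split; split.
  - apply W0_clW.
  - exact (clW_W0 H A nA z A_le z_norm).
  - exact (clW_spectrum H A nA z A_le z_norm).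
  - exact (spectrum_clW H A nA z A_lin A_le z_norm hH).
Qed.
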